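(* Let $T_1,T_2$ be tables joined on column $J$, where $T_1$ has a real-valued column $W$. Let $0<p_1,q_1,p_2,q_2\le1$, $S_1=\mathrm{UBS}_{p_1,q_1}(T_1,J)$, $S_2=\mathrm{UBS}_{p_2,q_2}(T_2,J)$, $p=\min\{p_1,p_2\}$, and $\hat J_{\mathrm{sum}}=\frac{1}{pq_1q_2}\sum_{(t_1,t_2)\in S_1\bowtie_J S_2}t_1.W$. Then $$\mathrm{Var}[\hat J_{\mathrm{sum}}]=\frac{1-q_2}{pq_2}\beta_1+\frac{1-q_1}{pq_1}\beta_2+\frac{(1-q_1)(1-q_2)}{pq_1q_2}\beta_3+\frac{1-p}{p}\beta_4,$$ where $\beta_1=\sum_v a_v^2\mu_v^2b_v$, $\beta_2=\sum_v a_v(\mu_v^2+\sigma_v^2)b_v^2$, $\beta_3=\sum_v a_v(\mu_v^2+\sigma_v^2)b_v$, $\beta_4=\sum_v a_v^2\mu_v^2b_v^2$.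
   Context: $T_1,T_2$ are finite multisets of tuples with a join attribute $J$ taking values in a finite set $\mathcal U$; $a_v$ (resp. $b_v$) is the number of tuples of $T_1$ (resp. $T_2$) with $J$-value $v$. For each $v$ with $a_v>0$, $\mu_v$ and $\sigma_v^2$ are the mean and (population) variance of the $W$-values of the $a_v$ tuples of $T_1$ with $J$-value $v$ (so $a_v(\mu_v^2+\sigma_v^2)$ is the sum of their squared $W$-values); terms with $a_v=0$ contribute $0$. $X\bowtie_J Y$ is the set of pairs $(t_1,t_2)\in X\times Y$ with $t_1.J=t_2.J$. $\mathrm{UBS}_{p,q}(T,J)$: given a hash function $h:\mathcal U\to[0,1]$, each tuple $t\in T$ with $h(t.J)<p$ is included independently with probability $q$; others are excluded. The values $h(v)$ are independent uniform on $[0,1]$, the same $h$ is used for both tables, and the Bernoulli coins are independent across all tuples and independent of $h$. *)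

From HB Require Import structures.
From mathcomp Require Import all_boot all_order all_algebra.
From mathcomp Require Import all_classical all_reals all_analysis.
Set Implicit Arguments. Unset Strict Implicit. Unset Printing Implicit Defensive.
Import Order.TTheory GRing.Theory Num.Theory.
Local Open Scope classical_set_scope.
Local Open Scope ring_scope.

(* Taking B k = setT for
   the indices outside a subfamily gives the product rule for every finite
   subfamily, i.e. the usual definition. *)
Definition mutually_independent {d} {T : measurableType d} {R : realType}
  (P : probability T R) (K : finType) (X : K -> T -> R) : Prop :=
  forall B : K -> set R, (forall k, measurable (B k)) ->
    P (\bigcap_(k in [set: K]) (X k @^-1` B k)) =
    (\prod_(k : K) P (X k @^-1` B k))%E.

Definition is_uniform01 {d} {T : measurableType d} {R : realType}
  (P : probability T R) (X : T -> R) : Prop :=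
  measurable_fun setT X /\
  forall B : set R, measurable B ->
    P (X @^-1` B) = @uniform_prob R 0 1 ltr01 B.

(* X is a Bernoulli(q) coin with values in {0,1}: 1 = "included" *)
Definition is_coin {d} {T : measurableType d} {R : realType}
  (P : probability T R) (q : R) (X : T -> R) : Prop :=
  measurable_fun setT X /\ (forall w, X w = 0 \/ X w = 1) /\
  P (X @^-1` [set 1]) = q%:E.

(* Table statistics: a table T1 is a finite type I1 of tuples (a multiset of
   tuples: distinct elements of I1 may carry identical values) with join
   attribute J1 : I1 -> U and W-column W : I1 -> R. *)
Definition cnt {I U : finType} (J : I -> U) (v : U) : nat := #|[set t | J t == v]|.

Definition mean_W {R : realType} {I U : finType} (J : I -> U) (W : I -> R) (v : U) : R :=
  (\sum_(t | J t == v) W t) / (cnt J v)%:R.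

Definition var_W {R : realType} {I U : finType} (J : I -> U) (W : I -> R) (v : U) : R :=
  (\sum_(t | J t == v) (W t - mean_W J W v) ^+ 2) / (cnt J v)%:R.

Definition indic {R : realType} (b : bool) : R := if b then 1 else 0.

(* Join-sum estimator.  Tuple t1 of T1 is in S1 iff h(t1.J) < p1 and its coin
   c1 t1 is 1; similarly for T2.  Jhat = 1/(p q1 q2) * sum over joined pairs
   (t1,t2) in S1 x S2 with t1.J = t2.J of t1.W. *)
Definition Jhat_sum {d} {T : measurableType d} {R : realType}
  {U I1 I2 : finType} (J1 : I1 -> U) (J2 : I2 -> U) (W : I1 -> R)
  (h : U -> T -> R) (c1 : I1 -> T -> R) (c2 : I2 -> T -> R)
  (p1 q1 p2 q2 : R) (w : T) : R :=
  (Num.min p1 p2 * q1 * q2)^-1 *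
  \sum_(t1 : I1) \sum_(t2 : I2 | J1 t1 == J2 t2)
     (indic (h (J1 t1) w < p1) * c1 t1 w) *
     (indic (h (J2 t2) w < p2) * c2 t2 w) * W t1.

From Pilot Require Import Defs.
From HB Require Import structures.
From mathcomp Require Import all_boot all_order all_algebra.
From mathcomp Require Import all_classical all_reals all_analysis.
From mathcomp Require Import ring.
Import Order.TTheory GRing.Theory Num.Theory.
Local Open Scope classical_set_scope.
Local Open Scope ring_scope.

(** The estimator is a linear combination, over the joined pairs t = (t1,t2), of the
    indicators that t survives both samples, so its variance is the double sum of the
    pairwise covariances of these indicators.  Each indicator is a product of independent
    {0,1}-variables: the hash test of the join value and the two coins.  Pairs with
    different join values share none of them and are uncorrelated, so the double sum
    splits into one block per join value v.  Inside a block the covariance only depends on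
    whether the two pairs share their T1 tuple and their T2 tuple, and the block sum
    factors into a T1 part, expressed through a_v mu_v and a_v (mu_v^2 + sigma_v^2), and a
    T2 part, expressed through b_v. *)

Section double_sums.
Variable R : comPzRingType.

(* [q ^+ (i != j).+1] is E[c_i c_j] for independent q-coins: q if i = j, q^2 otherwise. *)
Lemma sum_coin_pair_moment {I : finType} (Q : pred I) (f : I -> R) (q : R) :
  \sum_(i | Q i) \sum_(j | Q j) f i * f j * q ^+ (i != j).+1 =
  q ^+ 2 * (\sum_(i | Q i) f i) ^+ 2 + (q - q ^+ 2) * \sum_(i | Q i) f i ^+ 2.
Proof.
rewrite [X in q ^+ 2 * X]expr2 big_distrl !mulr_sumr -big_split /=; apply: eq_bigr => i Qi.
rewrite (bigD1 i Qi) [in RHS](bigD1 i Qi) /= eqxx.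
have -> : \sum_(j | Q j && (j != i)) f i * f j * q ^+ (i != j).+1 =
          q ^+ 2 * (f i * \sum_(j | Q j && (j != i)) f j).
  by rewrite !mulr_sumr; apply: eq_bigr => j /andP[_ ji]; rewrite eq_sym ji; ring.
ring.
Qed.

Lemma sum_pair_mul {I1 I2 : finType} (Q1 : pred I1) (Q2 : pred I2)
    (F : I1 -> I1 -> R) (G : I2 -> I2 -> R) :
  \sum_(i | Q1 i.1 && Q2 i.2) \sum_(j | Q1 j.1 && Q2 j.2) F i.1 j.1 * G i.2 j.2 =
  (\sum_(x | Q1 x) \sum_(y | Q1 y) F x y) * \sum_(x | Q2 x) \sum_(y | Q2 y) G x y.
Proof.
rewrite [RHS]big_distrlr [RHS]pair_big /=; apply: eq_bigr => i _.
by rewrite big_distrlr pair_big.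
Qed.

Lemma sum_block_covariance {I1 I2 : finType} (Q1 : pred I1) (Q2 : pred I2)
    (f : I1 -> R) (p q1 q2 : R) :
  let A := \sum_(x | Q1 x) f x in
  let b := \sum_(x | Q2 x) (1 : R) in
  \sum_(i | Q1 i.1 && Q2 i.2) \sum_(j | Q1 j.1 && Q2 j.2) f i.1 * f j.1 *
    (p * q1 ^+ (i.1 != j.1).+1 * q2 ^+ (i.2 != j.2).+1 - (p * q1 * q2) ^+ 2) =
  p * (q1 ^+ 2 * A ^+ 2 + (q1 - q1 ^+ 2) * \sum_(x | Q1 x) f x ^+ 2)
    * (q2 ^+ 2 * b ^+ 2 + (q2 - q2 ^+ 2) * b) - (p * q1 * q2) ^+ 2 * A ^+ 2 * b ^+ 2.
Proof.
move=> A b.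
have sqr_sum (I : finType) (Q : pred I) (g : I -> R) :
    (\sum_(x | Q x) g x) ^+ 2 = \sum_(x | Q x) \sum_(y | Q y) g x * g y.
  by rewrite expr2 big_distrlr.
(* The unit weights [1 * 1] let [sum_coin_pair_moment] evaluate the T2 factors. *)
transitivity (p * \sum_(i | Q1 i.1 && Q2 i.2) \sum_(j | Q1 j.1 && Q2 j.2)
      (f i.1 * f j.1 * q1 ^+ (i.1 != j.1).+1) * (1 * 1 * q2 ^+ (i.2 != j.2).+1)
    - (p * q1 * q2) ^+ 2 * \sum_(i | Q1 i.1 && Q2 i.2) \sum_(j | Q1 j.1 && Q2 j.2)
      (f i.1 * f j.1) * (1 * 1)).
  rewrite !mulr_sumr -sumrB; apply: eq_bigr => i _.
  by rewrite !mulr_sumr -sumrB; apply: eq_bigr => j _; ring.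
rewrite (sum_pair_mul Q1 Q2 (fun x y => f x * f y * q1 ^+ (x != y).+1)
                       (fun x y => 1 * 1 * q2 ^+ (x != y).+1)).
rewrite (sum_pair_mul Q1 Q2 (fun x y => f x * f y) (fun x y => 1 * 1)).
rewrite !sum_coin_pair_moment -!sqr_sum /A /b.
under [\sum_(x | Q2 x) 1 ^+ 2]eq_bigr do rewrite expr1n.
ring.
Qed.
End double_sums.

Lemma sum_joined_blocks (R : nmodType) (U I1 I2 : finType) (J1 : I1 -> U) (J2 : I2 -> U)
    (G : I1 * I2 -> I1 * I2 -> R) :
  (forall i j, J1 i.1 = J2 i.2 -> J1 j.1 = J2 j.2 -> J1 i.1 != J1 j.1 -> G i j = 0) ->
  \sum_(i | J1 i.1 == J2 i.2) \sum_(j | J1 j.1 == J2 j.2) G i j =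
  \sum_v \sum_(i | (J1 i.1 == v) && (J2 i.2 == v))
           \sum_(j | (J1 j.1 == v) && (J2 j.2 == v)) G i j.
Proof.
move=> G0; rewrite (partition_big (fun i => J1 i.1) xpredT) //; apply: eq_bigr => v _.
have blockE i : (J1 i.1 == J2 i.2) && (J1 i.1 == v) = (J1 i.1 == v) && (J2 i.2 == v).
  by case: (J1 i.1 =P v) => [->|_]; rewrite ?andbF // andbT eq_sym.
rewrite (eq_bigl _ _ blockE); apply: eq_bigr => i /andP[/eqP i1v /eqP i2v].
rewrite (bigID (fun j => J1 j.1 == v)) /= [X in _ + X]big1 ?addr0.
  by apply: eq_bigl => j; rewrite blockE.
by move=> j /andP[/eqP j12 jv]; apply: G0; rewrite ?i1v ?i2v // eq_sym.
Qed.

Section block_statistics.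
Variables (R : realType) (I U : finType) (J : I -> U) (W : I -> R) (v : U).

Lemma cnt_sum1 : (cnt J v)%:R = \sum_(t | J t == v) (1 : R).
Proof.
rewrite /cnt -sumr_const; apply: eq_bigl => t.
by apply/idP/idP => [/set_mem|/mem_set].
Qed.

Lemma cnt_neq0 t0 : J t0 = v -> (cnt J v)%:R != 0 :> R.
Proof.
move=> t0v; rewrite cnt_sum1 (bigD1 t0) /=; last exact/eqP.
by rewrite lt0r_neq0 // ltr_pwDl // sumr_ge0.
Qed.

Lemma cnt_mean_W : (cnt J v)%:R * mean_W J W v = \sum_(t | J t == v) W t.
Proof.
case: (pickP (fun t => J t == v)) => [t0 /eqP/cnt_neq0 a0 | nov].
  by rewrite mulrC divfK.
by rewrite big_pred0 // cnt_sum1 big_pred0 // mul0r.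
Qed.

Lemma cnt_moment2_W :
  (cnt J v)%:R * (mean_W J W v ^+ 2 + var_W J W v) = \sum_(t | J t == v) W t ^+ 2.
Proof.
case: (pickP (fun t => J t == v)) => [t0 /eqP/cnt_neq0 a0 | nov]; last first.
  by rewrite big_pred0 // cnt_sum1 big_pred0 // mul0r.
rewrite /var_W; set mu := mean_W J W v.
have -> : \sum_(t | J t == v) (W t - mu) ^+ 2 =
    \sum_(t | J t == v) W t ^+ 2 - mu *+ 2 * \sum_(t | J t == v) W t
    + mu ^+ 2 * \sum_(t | J t == v) 1.
  by rewrite !mulr_sumr -sumrB -big_split; apply: eq_bigr => t _ /=; ring.
by rewrite -cnt_sum1 -cnt_mean_W -/mu; field.
Qed.
End block_statistics.

Section linear_combinations.
Context {d} {T : measurableType d} {R : realType} (P : probability T R).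

Lemma measurable_bounded_Lfun1 (M : R) (f : T -> R) :
  measurable_fun setT f -> (forall w, `|f w| <= M) -> f \in Lfun P 1.
Proof.
move=> mf fM; apply/Lfun1_integrable/measurable_bounded_integrable => //.
  exact: le_lt_trans (probability_le1 P measurableT) (ltry 1).
exists M; split; first exact: num_real.
by move=> N MN w _; exact: le_trans (fM w) (ltW MN).
Qed.

Lemma expectation_lin_comb {I : finType} (Q : pred I) (c : I -> R) (Y : I -> T -> R)
    (m : I -> R) :
  (forall i, Y i \in Lfun P 1) -> (forall i, 'E_P[Y i] = (m i)%:E)%E ->
  ('E_P[(fun w => \sum_(i | Q i) c i * Y i w)%R] = (\sum_(i | Q i) c i * m i)%:E)%E.
Proof.
move=> Y1 EY; rewrite -sumEFin.
have -> : (fun w => \sum_(i | Q i) c i * Y i w) =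
          \sum_(Z <- [seq c i \o* Y i | i <- index_enum I & Q i]) Z.
  by rewrite big_map big_filter fct_sumE; apply/funext => w; apply: eq_bigr => i _; rewrite mulrC.
rewrite expectation_sum; last first.
  by move=> Z /mapP[i _ ->]; apply: Lfun_scale.
rewrite big_map big_filter; apply: eq_bigr => i _.
by rewrite expectationZl // EY -EFinM.
Qed.

Lemma Lfun1_lin_comb {I : finType} (Q : pred I) (c : I -> R) (Y : I -> T -> R) :
  (forall i, Y i \in Lfun P 1) -> (fun w => \sum_(i | Q i) c i * Y i w) \in Lfun P 1.
Proof.
move=> Y1; have -> : (fun w => \sum_(i | Q i) c i * Y i w) = \sum_(i | Q i) (c i \o* Y i).
  by rewrite fct_sumE; apply/funext => w; apply: eq_bigr => i _; rewrite mulrC.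
by apply: rpred_sum => i _; exact: Lfun_scale.
Qed.

Lemma variance_lin_comb {I : finType} (Q : pred I) (c : I -> R) (Y : I -> T -> R)
    (m1 : I -> R) (m2 : I -> I -> R) :
  (forall i, Y i \in Lfun P 1) -> (forall i j, Y i \* Y j \in Lfun P 1) ->
  (forall i, 'E_P[Y i] = (m1 i)%:E)%E -> (forall i j, 'E_P[Y i \* Y j] = (m2 i j)%:E)%E ->
  'V_P[fun w => \sum_(i | Q i) c i * Y i w] =
  (\sum_(i | Q i) \sum_(j | Q j) c i * c j * (m2 i j - m1 i * m1 j))%:E.
Proof.
move=> Y1 YY1 EY EYY; set X := fun w => _.
have XXE : (X * X)%R = fun w => \sum_(k | Q k.1 && Q k.2) (c k.1 * c k.2) * (Y k.1 \* Y k.2) w.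
  rewrite mulrfctE; apply/funext => w; rewrite /X big_distrlr pair_big /=.
  by apply: eq_bigr => k _; rewrite mulrACA.
have X1 : X \in Lfun P 1 by exact: Lfun1_lin_comb.
rewrite /variance covarianceE //; last by rewrite XXE; exact: Lfun1_lin_comb.
rewrite XXE (expectation_lin_comb _ _ _ _ Y1 EY).
rewrite (expectation_lin_comb _ _ (fun k : I * I => Y k.1 \* Y k.2) (fun k => m2 k.1 k.2)
  (fun k => YY1 k.1 k.2) (fun k => EYY k.1 k.2)).
rewrite -EFinM -EFinB big_distrlr !pair_big -sumrB /=; congr EFin.
by apply: eq_bigr => k _; ring.
Qed.
End linear_combinations.

Lemma indic_bigcap (T : Type) (R : realType) (K : finType) (A : K -> set T) (w : T) :
  \1_(\bigcap_(k in [set: K]) A k) w = \prod_k (\1_(A k) w : R).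
Proof.
rewrite indicE; have [Aw|nAw] := boolP (w \in _).
  by rewrite big1 // => k _; rewrite indicE mem_set //; move/set_mem: Aw; exact.
have [k nAk] : exists k, ~ A k w.
  by apply/existsNP => Aw; move/negP: nAw; apply; apply/mem_set => k _; exact: Aw.
by rewrite (bigD1 k) //= indicE memNset // mul0r.
Qed.

Lemma expectation_prod_indic d (T : measurableType d) (R : realType) (P : probability T R)
    (K : finType) (X : K -> T -> R) (S : pred K) (B : K -> set R) :
  mutually_independent P X -> (forall k, measurable_fun setT (X k)) ->
  (forall k, measurable (B k)) ->
  ('E_P[(fun w => \prod_(k | S k) \1_(B k) (X k w))%R] =
   \prod_(k | S k) P (X k @^-1` B k))%E.
Proof.
move=> indX mX mB; pose B' k := if S k then B k else setT.
have mB' k : measurable (B' k) by rewrite /B'; case: (S k).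
have -> : (fun w => \prod_(k | S k) \1_(B k) (X k w)) =
          \1_(\bigcap_(k in [set: K]) X k @^-1` B' k) :> (T -> R).
  apply/funext => w; rewrite indic_bigcap big_mkcond; apply: eq_bigr => k _.
  by rewrite /B'; case: (S k); rewrite ?indicT.
rewrite expectation_indic; last first.
  apply: fin_bigcap_measurable => [|k _]; first exact: finite_finset.
  by rewrite -[X in measurable X]setTI; exact: mX.
rewrite indX // [RHS]big_mkcond; apply: eq_bigr => k _.
by rewrite /B'; case: (S k); rewrite ?preimage_setT ?probability_setT.
Qed.

Lemma uniform_prob_lt (R : realType) (x : R) : 0 <= x <= 1 ->
  uniform_prob ltr01 `]-oo, x[ = x%:E.
Proof.
move=> /andP[x0 x1]; rewrite /uniform_prob integral_uniform_pdf.
have -> : `]-oo, x[ `&` `[0, 1] = `[0, x[%classic.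
  apply/seteqP; split => y /=; rewrite !in_itv /=.
    by move=> [yx /andP[y0 _]]; rewrite y0 yx.
  by move=> /andP[y0 yx]; rewrite yx y0 (ltW (lt_le_trans yx x1)).
rewrite (eq_integral (fun=> 1%:E)); last first.
  move=> y; rewrite inE /= in_itv /= => /andP[y0 yx].
  by rewrite /uniform_pdf y0 (ltW (lt_le_trans yx x1)) subr0 invr1.
rewrite integral_cst //= lebesgue_measure_itv /= lte_fin mul1e.
by case: ltgtP x0 => // [x_gt0 _|<-]; rewrite ?sube0.
Qed.

Lemma mulr01_id {R : pzRingType} (x : R) : x = 0 \/ x = 1 -> x * x = x.
Proof. by case=> ->; rewrite ?mulr0 ?mulr1. Qed.

Lemma mulr01 {R : pzRingType} {x y : R} :
  x = 0 \/ x = 1 -> y = 0 \/ y = 1 -> x * y = 0 \/ x * y = 1.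
Proof. by case=> ->; case=> ->; rewrite ?mulr0 ?mul0r ?mulr1; [left|left|left|right]. Qed.

Lemma prodr_pred2_id {R : comPzSemiRingType} {I : finType} (f : I -> R) (a b : I) :
  f a * f a = f a -> \prod_(i | pred2 a b i) f i = f a * f b.
Proof.
move=> faa; have [<-|ab] := eqVneq a b.
  by rewrite (eq_bigl (pred1 a)) ?big_pred1_eq // => i /=; rewrite orbb.
rewrite (bigD1 a) /= ?eqxx // (big_pred1 b) // => i /=.
by case: (eqVneq i a) => [->|]; rewrite ?(negbTE ab) ?andbT.
Qed.

Lemma indic_set1_01 {R : realType} (x : R) : x = 0 \/ x = 1 -> x = \1_[set 1] x.
Proof.
rewrite indicE; case=> ->; last by rewrite mem_set.
by rewrite memNset // => /esym/eqP; rewrite oner_eq0.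
Qed.

Definition sampling_family {d} {Omega : measurableType d} {R : realType} {U I1 I2 : finType}
    (h : U -> Omega -> R) (c1 : I1 -> Omega -> R) (c2 : I2 -> Omega -> R)
    (k : U + (I1 + I2)) : Omega -> R :=
  match k with inl v => h v | inr (inl t) => c1 t | inr (inr t) => c2 t end.

Section join_sampling.
Context {d} {Omega : measurableType d} {R : realType} {P : probability Omega R}
  {U I1 I2 : finType} {h : U -> Omega -> R} {c1 : I1 -> Omega -> R} {c2 : I2 -> Omega -> R}
  {p q1 q2 : R}.
Hypotheses (p01 : 0 <= p <= 1) (h_unif : forall v, is_uniform01 P (h v))
  (c1_coin : forall t, is_coin P q1 (c1 t)) (c2_coin : forall t, is_coin P q2 (c2 t))
  (indep : mutually_independent P (sampling_family h c1 c2)).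

Definition key_kept v w : R := Defs.indic (h v w < p).

Lemma key_keptE v w : key_kept v w = \1_`]-oo, p[ (h v w).
Proof.
rewrite indicE /key_kept /Defs.indic.
by case: ltP => hp; [rewrite mem_set //= in_itv /= hp | rewrite memNset //= in_itv /= ltNge hp].
Qed.

Lemma expectation_kept_prod (KU : pred U) (K1 : pred I1) (K2 : pred I2) :
  ('E_P[(fun w => (\prod_(v | KU v) key_kept v w) * (\prod_(t | K1 t) c1 t w)
                  * \prod_(t | K2 t) c2 t w)%R] =
   (p ^+ #|KU| * q1 ^+ #|K1| * q2 ^+ #|K2|)%:E)%E.
Proof.
pose S k := match k with inl v => KU v | inr (inl t) => K1 t | inr (inr t) => K2 t end.
pose B (k : U + (I1 + I2)) : set R := if k is inl _ then `]-oo, p[%classic else [set 1].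
have -> : (fun w => (\prod_(v | KU v) key_kept v w) * (\prod_(t | K1 t) c1 t w)
                  * \prod_(t | K2 t) c2 t w) =
          fun w => \prod_(k | S k) \1_(B k) (sampling_family h c1 c2 k w).
  apply/funext => w; rewrite !big_sumType /= mulrA.
  congr (_ * _ * _); apply: eq_bigr => x _.
  - exact: key_keptE.
  - exact/indic_set1_01/(c1_coin x).2.1.
  - exact/indic_set1_01/(c2_coin x).2.1.
rewrite expectation_prod_indic //; last 2 first.
- by case=> [v|[t|t]]; [exact: (h_unif v).1 | exact: (c1_coin t).1 | exact: (c2_coin t).1].
- by case=> [v|k]; [exact: measurable_itv | exact: measurable_set1].
have kept_key v : P (h v @^-1` `]-oo, p[) = p%:E.
  by rewrite (h_unif v).2 ?uniform_prob_lt.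
rewrite !big_sumType /= (eq_bigr _ (fun v _ => kept_key v)).
rewrite (eq_bigr _ (fun t _ => (c1_coin t).2.2)) (eq_bigr _ (fun t _ => (c2_coin t).2.2)).
have prod_const (T : finType) (A : pred T) (x : R) : \prod_(t | A t) x = x ^+ #|A|.
  by rewrite -prodr_const.
by rewrite !prodEFin !prod_const -!EFinM mulrA.
Qed.

Lemma key_kept01 v w : key_kept v w = 0 \/ key_kept v w = 1.
Proof. by rewrite /key_kept /Defs.indic; case: ifP; [right | left]. Qed.

Lemma measurable_key_kept v : measurable_fun setT (key_kept v).
Proof.
have -> : key_kept v = \1_`]-oo, p[ \o h v by apply/funext => w; exact: key_keptE.
exact: measurableT_comp (measurable_realfun.measurable_indic _) (h_unif v).1.
Qed.

Context {J1 : I1 -> U}.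

Definition pair_kept (t : I1 * I2) w : R := key_kept (J1 t.1) w * c1 t.1 w * c2 t.2 w.

Lemma pair_kept01 t w : pair_kept t w = 0 \/ pair_kept t w = 1.
Proof.
apply: mulr01; [apply: mulr01|]; first exact: key_kept01.
- exact: (c1_coin _).2.1.
- exact: (c2_coin _).2.1.
Qed.

Lemma measurable_pair_kept t : measurable_fun setT (pair_kept t).
Proof.
apply: measurable_realfun.measurable_funM; [apply: measurable_realfun.measurable_funM|].
- exact: measurable_key_kept.
- exact: (c1_coin _).1.
- exact: (c2_coin _).1.
Qed.

Lemma pair_kept_Lfun1 t : pair_kept t \in Lfun P 1.
Proof.
apply: (measurable_bounded_Lfun1 P 1) => [|w]; first exact: measurable_pair_kept.
by case: (pair_kept01 t w) => ->; rewrite ?normr0 ?normr1.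
Qed.

Lemma pair_kept_mul_Lfun1 t s : pair_kept t \* pair_kept s \in Lfun P 1.
Proof.
apply: (measurable_bounded_Lfun1 P 1) => [|w].
  exact: measurable_realfun.measurable_funM (measurable_pair_kept t) (measurable_pair_kept s).
by case: (mulr01 (pair_kept01 t w) (pair_kept01 s w)) => /= ->; rewrite ?normr0 ?normr1.
Qed.

Lemma expectation_pair_kept t : ('E_P[pair_kept t] = (p * q1 * q2)%:E)%E.
Proof.
have := expectation_kept_prod (pred1 (J1 t.1)) (pred1 t.1) (pred1 t.2).
rewrite !card1 !expr1 => <-; congr expectation; apply/funext => w.
by rewrite /pair_kept /= !big_pred1_eq.
Qed.

Lemma expectation_pair_kept_mul t s :
  ('E_P[pair_kept t \* pair_kept s] =
   (p ^+ (J1 t.1 != J1 s.1).+1 * q1 ^+ (t.1 != s.1).+1 * q2 ^+ (t.2 != s.2).+1)%:E)%E.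
Proof.
have := expectation_kept_prod (pred2 (J1 t.1) (J1 s.1)) (pred2 t.1 s.1) (pred2 t.2 s.2).
rewrite !card2 => <-; congr expectation; apply/funext => w.
rewrite /pair_kept /= !prodr_pred2_id; first ring.
- exact/mulr01_id/(c2_coin _).2.1.
- exact/mulr01_id/(c1_coin _).2.1.
- exact/mulr01_id/key_kept01.
Qed.

Context {J2 : I2 -> U}.

Lemma variance_join_sum (f : I1 -> R) :
  let A v := \sum_(t | J1 t == v) f t in
  let B v := \sum_(t | J1 t == v) f t ^+ 2 in
  let b v := \sum_(t | J2 t == v) (1 : R) in
  'V_P[fun w => \sum_(t | J1 t.1 == J2 t.2) f t.1 * pair_kept t w] =
  (\sum_v (p * (q1 ^+ 2 * A v ^+ 2 + (q1 - q1 ^+ 2) * B v)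
              * (q2 ^+ 2 * b v ^+ 2 + (q2 - q2 ^+ 2) * b v)
           - (p * q1 * q2) ^+ 2 * A v ^+ 2 * b v ^+ 2))%:E.
Proof.
move=> A B b.
rewrite (variance_lin_comb _ _ _ _ _ _ pair_kept_Lfun1 pair_kept_mul_Lfun1
  expectation_pair_kept expectation_pair_kept_mul).
(* Pairs with different join values are built from disjoint independent variables. *)
rewrite sum_joined_blocks => [|i j /= i12 j12 ij]; last first.
  have ij1 : i.1 != j.1 by apply: contraNneq ij => ->.
  have ij2 : i.2 != j.2 by apply: contraNneq ij; rewrite i12 j12 => ->.
  by rewrite ij ij1 ij2; ring.
congr EFin; apply: eq_bigr => v _; rewrite -sum_block_covariance.
apply: eq_bigr => i /andP[/eqP i1 _]; apply: eq_bigr => j /andP[/eqP j1 _].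
by rewrite i1 j1 eqxx expr1 expr2.
Qed.

(* The shared hash turns the tests h(v) < p1 and h(v) < p2 into h(v) < min p1 p2. *)
Lemma Jhat_sumE (W : I1 -> R) (p1 p2 : R) : p = Num.min p1 p2 ->
  Jhat_sum J1 J2 W h c1 c2 p1 q1 p2 q2 =
  fun w => \sum_(t | J1 t.1 == J2 t.2) ((p * q1 * q2)^-1 * W t.1) * pair_kept t w.
Proof.
move=> pE; apply/funext => w; rewrite /Jhat_sum -pE mulr_sumr.
under eq_bigr do rewrite mulr_sumr.
rewrite pair_big_dep /=; apply: eq_bigr => t /eqP Jt.
rewrite /pair_kept /key_kept /Defs.indic pE lt_min -Jt.
by case: (_ < p1); case: (_ < p2); rewrite /=; ring.
Qed.
End join_sampling.

Theorem lemma5 (d : measure_display) (Omega : measurableType d) (R : realType)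
  (P : probability Omega R) (U I1 I2 : finType)
  (J1 : I1 -> U) (J2 : I2 -> U) (W : I1 -> R)
  (p1 q1 p2 q2 : R)
  (h : U -> Omega -> R) (c1 : I1 -> Omega -> R) (c2 : I2 -> Omega -> R) :
  0 < p1 <= 1 -> 0 < q1 <= 1 -> 0 < p2 <= 1 -> 0 < q2 <= 1 ->
  (forall v, is_uniform01 P (h v)) ->
  (forall t, is_coin P q1 (c1 t)) ->
  (forall t, is_coin P q2 (c2 t)) ->
  mutually_independent P
    (fun k : U + (I1 + I2) =>
       match k with inl v => h v | inr (inl t) => c1 t | inr (inr t) => c2 t end) ->
  let p := Num.min p1 p2 in
  let a := fun v => (cnt J1 v)%:R : R in
  let b := fun v => (cnt J2 v)%:R : R in
  let mu := mean_W J1 W in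
  let s2 := var_W J1 W in
  let beta1 := \sum_(v : U) a v ^+ 2 * mu v ^+ 2 * b v in
  let beta2 := \sum_(v : U) a v * (mu v ^+ 2 + s2 v) * b v ^+ 2 in
  let beta3 := \sum_(v : U) a v * (mu v ^+ 2 + s2 v) * b v in
  let beta4 := \sum_(v : U) a v ^+ 2 * mu v ^+ 2 * b v ^+ 2 in
  'V_P[Jhat_sum J1 J2 W h c1 c2 p1 q1 p2 q2] =
    ((1 - q2) / (p * q2) * beta1 + (1 - q1) / (p * q1) * beta2
     + (1 - q1) * (1 - q2) / (p * q1 * q2) * beta3 + (1 - p) / p * beta4)%:E.
Proof.
move=> /andP[p1_gt0 p1_le1] /andP[q1_gt0 _] /andP[p2_gt0 _] /andP[q2_gt0 _].
move=> h_unif c1_coin c2_coin indep p a b mu s2 beta1 beta2 beta3 beta4.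
have p_gt0 : 0 < p by rewrite lt_min p1_gt0.
have p01 : 0 <= p <= 1 by rewrite ltW //= ge_min p1_le1.
rewrite (Jhat_sumE W p1 p2 (erefl p)).
rewrite (variance_join_sum p01 h_unif c1_coin c2_coin indep (fun t => (p * q1 * q2)^-1 * W t)).
congr EFin; rewrite /beta1 /beta2 /beta3 /beta4 !mulr_sumr -!big_split.
apply: eq_bigr => v _ /=.
under [\sum_(t | J1 t == v) (_ * W t) ^+ 2]eq_bigr do rewrite exprMn.
rewrite -!mulr_sumr -cnt_mean_W -cnt_moment2_W -!cnt_sum1 /a /b /mu /s2.
by field; rewrite !gt_eqF.
Qed.
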